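(* Let $\overline{L}$, $D$, $K$, $\alpha(i)$ and $\beta(i)$ be as in the context. There exist $i_1$ and a constant $c_4>0$ such that for all $i\ge i_1$ and all $\mathbf{y}\in\mathbb{R}^{NM}$, $$\mathbf{y}^T\Big(\beta(i)\,\overline{L}\otimes I_M+\alpha(i)(I_N\otimes K)D\Big)\mathbf{y}\ \ge\ c_4\,\alpha(i)\,\|\mathbf{y}\|^2.$$
   Context: Objects: - $\overline{L}$ is the $N\times N$ mean of an i.i.d. sequence of random graph Laplacians on $N$ vertices, with $\lambda_2(\overline{L})>0$. - $\overline{H}_n\in\mathbb{R}^{M_n\times M}$ for $n=1,\dots,N$, with $G=\sum_n\overline{H}_n^T\overline{H}_n$ invertible. - $D=\mathrm{blockdiag}(\overline{H}_1^T\overline{H}_1,\dots,\overline{H}_N^T\overline{H}_N)$. - $K\in\mathbb{R}^{M\times M}$ is symmetric positive definite and commutes with $G$. Weight sequences: $\alpha(i)=a/(i+1)^{\tau_1}$ and $\beta(i)=b/(i+1)^{\tau_2}$, with $a,b>0$, $0<\tau_2\le\tau_1\le1$, and $\tau_1>\max(\tfrac12+\gamma_0,\tau_2+\gamma_0+\tfrac1{2+\varepsilon_1})$ for some $0\le\gamma_0<\tfrac12$ and $\varepsilon_1>0$. In particular $\tau_2<\tau_1$. *)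

From HB Require Import structures.
From mathcomp Require Import all_boot all_order all_algebra.
From mathcomp Require Import mxtens.
From mathcomp Require Import all_classical all_reals all_analysis.

Set Implicit Arguments.
Unset Strict Implicit.
Unset Printing Implicit Defensive.

Import Order.TTheory GRing.Theory Num.Theory.
Local Open Scope ring_scope.

(* Kronecker product A ⊗ B (standard convention: row index i1 * p + i2),
   from mathcomp-real-closed's mxtens. *)
Notation kron := tensmx.

(* Mean of i.i.d. random graph Laplacians on N vertices: a weighted graph
   Laplacian whose edge weights are the edge probabilities (in [0,1]). *)
Definition mean_graph_laplacian (R : realType) (N : nat) (L : 'M[R]_N) : Prop :=
  L^T = L /\
  (forall i j : 'I_N, i != j -> -1 <= L i j <= 0) /\
  (forall i : 'I_N, \sum_(j < N) L i j = 0).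

(* lambda_2(A) > 0 for a real symmetric matrix A: writing the (real) eigenvalues
   of A, with multiplicity, in increasing order s_0 <= s_1 <= ... <= s_(N-1)
   (i.e. char_poly A = prod ('X - s_k)), the second smallest one s_1 is > 0. *)
Definition lambda2_pos (R : realType) (N : nat) (A : 'M[R]_N) : Prop :=
  exists s : seq R,
    [/\ size s = N, sorted <=%R s,
        char_poly A = \prod_(x <- s) ('X - x%:P) & 0 < nth 0 s 1].

Definition blockdiag_HtH (R : realType) (N M : nat) (Ms : 'I_N -> nat)
    (H : forall n : 'I_N, 'M[R]_(Ms n, M)) : 'M[R]_(N * M) :=
  \sum_(n < N) kron (delta_mx n n) ((H n)^T *m H n).

Definition gram_sum (R : realType) (N M : nat) (Ms : 'I_N -> nat)
    (H : forall n : 'I_N, 'M[R]_(Ms n, M)) : 'M[R]_M :=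
  \sum_(n < N) (H n)^T *m H n.

Definition spd (R : realType) (M : nat) (K : 'M[R]_M) : Prop :=
  K^T = K /\ forall v : 'cV[R]_M, v != 0 -> 0 < (v^T *m K *m v) 0 0.

Definition sqnorm (R : realType) (k : nat) (y : 'cV[R]_k) : R :=
  \sum_(j < k) y j 0 ^+ 2.

Definition wseq (R : realType) (a tau : R) (i : nat) : R :=
  a / ((i.+1)%:R `^ tau).

(* Write y = (y_1, ..., y_N) in agent blocks and split each block into the
   network mean ym and a deviation e_n.  Since lambda_2(Lbar) > 0, the Laplacian
   term is bounded below by lambda_2 times the total deviation; since K G is
   symmetric positive definite (K and G commute), the local term is bounded
   below by a constant times |ym|^2, up to cross terms quadratic in the
   deviations.  Those cross terms are absorbed by the Laplacian term as soon as
   beta(i) / alpha(i), which grows like (i+1)^(tau1 - tau2), is large enough. *)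

From HB Require Import structures.
From mathcomp Require Import all_boot all_order all_algebra.
From mathcomp Require Import mxtens.
From mathcomp Require Import all_classical all_reals all_analysis.
From mathcomp Require Import ring lra.
Import Order.TTheory GRing.Theory Num.Theory numFieldNormedType.Exports.
Set Implicit Arguments.
Unset Strict Implicit.
Unset Printing Implicit Defensive.
Local Open Scope ring_scope.

Section BilinearForm.
Variable R : realType.

Definition bform n (S : 'M[R]_n) (v w : 'rV[R]_n) : R := (v *m S *m w^T) 0 0.
Definition rnorm2 n (v : 'rV[R]_n) : R := bform 1%:M v v.

Lemma bformDl n (S : 'M[R]_n) u v w : bform S (u + v) w = bform S u w + bform S v w.
Proof. by rewrite /bform !mulmxDl mxE. Qed.

Lemma bformDr n (S : 'M[R]_n) u v w : bform S u (v + w) = bform S u v + bform S u w.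
Proof. by rewrite /bform linearD /= mulmxDr mxE. Qed.

Lemma bformZl n (S : 'M[R]_n) k v w : bform S (k *: v) w = k * bform S v w.
Proof. by rewrite /bform -!scalemxAl mxE. Qed.

Lemma bformZr n (S : 'M[R]_n) k v w : bform S v (k *: w) = k * bform S v w.
Proof. by rewrite /bform linearZ /= -scalemxAr mxE. Qed.

Lemma bformC n (S : 'M[R]_n) v w : S^T = S -> bform S v w = bform S w v.
Proof.
move=> sS; rewrite /bform.
transitivity ((v *m S *m w^T)^T 0 0); first by rewrite [RHS]mxE.
by rewrite !trmx_mul trmxK sS mulmxA.
Qed.

Lemma bform_add n (S T : 'M[R]_n) v w : bform (S + T) v w = bform S v w + bform T v w.
Proof. by rewrite /bform mulmxDr mulmxDl mxE. Qed.

Lemma bform_scale n (S : 'M[R]_n) k v w : bform (k *: S) v w = k * bform S v w.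
Proof. by rewrite /bform -scalemxAr -scalemxAl mxE. Qed.

Lemma bform_sum n (I : finType) (F : I -> 'M[R]_n) v w :
  bform (\sum_i F i) v w = \sum_i bform (F i) v w.
Proof. by rewrite /bform mulmx_sumr mulmx_suml summxE. Qed.

Lemma bformE n (S : 'M[R]_n) v w :
  bform S v w = \sum_i \sum_j v 0 i * S i j * w 0 j.
Proof.
rewrite /bform mxE exchange_big /=; apply: eq_bigr => j _.
by rewrite !mxE mulr_suml.
Qed.

Lemma bform_delta_r n (S : 'M[R]_n) v i : bform S v (delta_mx 0 i) = (v *m S) 0 i.
Proof. by rewrite /bform trmx_delta -colE mxE. Qed.

Lemma bform1_delta n (i k : 'I_n) :
  bform 1%:M (delta_mx 0 i) (delta_mx 0 k) = (i == k)%:R :> R.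
Proof. by rewrite bform_delta_r mulmx1 mxE eqxx eq_sym. Qed.

Lemma bform1_const n (v : 'rV[R]_n) : bform 1%:M v (const_mx 1) = \sum_i v 0 i.
Proof. by rewrite /bform mulmx1 mxE; apply: eq_bigr => i _; rewrite !mxE mulr1. Qed.

Lemma bform1_0r n (v : 'rV[R]_n) : bform 1%:M v 0 = 0.
Proof. by rewrite /bform trmx0 mulmx0 mxE. Qed.

Lemma quad_bform n (S : 'M[R]_n) (y : 'cV[R]_n) : (y^T *m S *m y) 0 0 = bform S y^T y^T.
Proof. by rewrite /bform trmxK. Qed.

Lemma rnorm2E n (v : 'rV[R]_n) : rnorm2 v = \sum_j v 0 j ^+ 2.
Proof. by rewrite /rnorm2 /bform mulmx1 mxE; apply: eq_bigr => j _; rewrite mxE expr2. Qed.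

Lemma rnorm2_ge0 n (v : 'rV[R]_n) : 0 <= rnorm2 v.
Proof. by rewrite rnorm2E sumr_ge0 // => j _; rewrite sqr_ge0. Qed.

Lemma rnorm2_coord n (v : 'rV[R]_n) i : v 0 i ^+ 2 <= rnorm2 v.
Proof. by rewrite rnorm2E (bigD1 i) //= lerDl sumr_ge0 // => j _; rewrite sqr_ge0. Qed.

Lemma rnorm2_eq0 n (v : 'rV[R]_n) : (rnorm2 v == 0) = (v == 0).
Proof.
apply/eqP/eqP => [v0|->]; last by rewrite /rnorm2 /bform !mul0mx mxE.
apply/rowP => i; rewrite mxE; apply/eqP; rewrite -sqrf_eq0 eq_le sqr_ge0 andbT.
by rewrite -v0 rnorm2_coord.
Qed.

Lemma rnorm2D_le n (u w : 'rV[R]_n) : rnorm2 (u + w) <= 2 * rnorm2 u + 2 * rnorm2 w.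
Proof.
rewrite !rnorm2E !mulr_sumr -big_split /=; apply: ler_sum => i _.
by rewrite mxE; have := sqr_ge0 (u 0 i - w 0 i); nra.
Qed.

Lemma bform_gram n m (A : 'M[R]_(m, n)) v : bform (A^T *m A) v v = rnorm2 (v *m A^T).
Proof. by rewrite /rnorm2 /bform mulmx1 trmx_mul trmxK !mulmxA. Qed.

Lemma bform_diag_continuous n (S : 'M[R]_n) :
  continuous (fun v : 'rV[R]_n => bform S v v).
Proof.
have -> : (fun v : 'rV[R]_n => bform S v v) =
    (fun v => \sum_i \sum_j (v 0 i * S i j * v 0 j)) by apply: funext => v; rewrite bformE.
apply: continuous_big => [|i _]; first exact: add_continuous.
apply: continuous_big => [|j _ v]; first exact: add_continuous.
apply: (@continuousM R _ (fun v : 'rV[R]_n => v 0 i * S i j)); last exact: coord_continuous.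
apply: (@continuousM R _ (fun v : 'rV[R]_n => v 0 i)); last exact: cst_continuous.
exact: coord_continuous.
Qed.

Lemma bform1_continuous n (c : 'rV[R]_n) : continuous (fun v : 'rV[R]_n => bform 1%:M v c).
Proof.
have -> : (fun v : 'rV[R]_n => bform 1%:M v c) = (fun v => \sum_j (v 0 j * c 0 j)).
  by apply: funext => v; rewrite /bform mulmx1 !mxE; apply: eq_bigr => j _; rewrite mxE.
apply: continuous_big => [|j _ v]; first exact: add_continuous.
apply: (@continuousM R _ (fun v : 'rV[R]_n => v 0 j)); last exact: cst_continuous.
exact: coord_continuous.
Qed.

Definition abs_entry_sum n (S : 'M[R]_n) : R := \sum_i \sum_j `|S i j|.

Lemma abs_entry_sum_ge0 n (S : 'M[R]_n) : 0 <= abs_entry_sum S.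
Proof. by apply: sumr_ge0 => i _; apply: sumr_ge0. Qed.

Lemma normM_le_amgm (e x y : R) : 0 < e -> `|x * y| <= (e * x ^+ 2 + y ^+ 2 / e) / 2.
Proof.
move=> e0; rewrite normrM -[x ^+ 2]real_normK ?num_real // -[y ^+ 2]real_normK ?num_real //.
have -> : (e * `|x| ^+ 2 + `|y| ^+ 2 / e) / 2 =
    `|x| * `|y| + (e * `|x| - `|y|) ^+ 2 / (2 * e) by field; rewrite gt_eqF.
by rewrite lerDl divr_ge0 ?sqr_ge0 // mulr_ge0 // ltW.
Qed.

Lemma bform_ge_abs_entry_sum n (S : 'M[R]_n) v w (e : R) : 0 < e ->
  - (abs_entry_sum S * ((e * rnorm2 v + rnorm2 w / e) / 2)) <= bform S v w.
Proof.
move=> e0; rewrite bformE /abs_entry_sum mulr_suml -sumrN; apply: ler_sum => i _.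
rewrite mulr_suml -sumrN; apply: ler_sum => j _.
have vw : `|v 0 i * w 0 j| <= (e * rnorm2 v + rnorm2 w / e) / 2.
  apply: le_trans (normM_le_amgm _ _ e0) _; rewrite ler_pM2r // lerD //.
    by rewrite ler_pM2l // rnorm2_coord.
  by rewrite ler_pM2r ?invr_gt0 // rnorm2_coord.
have : `|v 0 i * S i j * w 0 j| <= `|S i j| * ((e * rnorm2 v + rnorm2 w / e) / 2).
  by rewrite mulrAC normrM mulrC ler_wpM2l.
by rewrite ler_norml => /andP[].
Qed.

End BilinearForm.

Section Rayleigh.
Variable R : realType.

Lemma linear_quadratic_ge0 (a b : R) : (forall t, 0 <= t * a + t ^+ 2 * b) -> a = 0.
Proof.
move=> ge0; set e := (`|b| + 1)^-1.
have e0 : 0 < e by rewrite invr_gt0 ltr_wpDl.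
have eb : e * b < 1.
  rewrite /e mulrC ltr_pdivrMr ?ltr_wpDl // mul1r.
  by rewrite (le_lt_trans (ler_norm b)) // ltrDl.
have := ge0 (- a * e); rewrite expr2 => Ht.
have a2 : a ^+ 2 * e <= 0 by nra.
by apply/eqP; rewrite -sqrf_eq0 eq_le sqr_ge0 andbT -(pmulr_lle0 _ e0).
Qed.

Variables (n : nat) (S : 'M[R]_n) (c : 'rV[R]_n).
Hypothesis symS : S^T = S.

Let orth w := bform 1%:M w c = 0.

(* The Rayleigh quotient of [S] attains its minimum on the compact unit sphere
   of [c]^perp. *)
Lemma rayleigh_min_exists : (exists v0, rnorm2 v0 = 1 /\ orth v0) ->
  exists2 v, rnorm2 v = 1 /\ orth v &
    forall w, orth w -> bform S v v * rnorm2 w <= bform S w w.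
Proof.
move=> [v0 v0A].
pose A := [set v : 'rV[R]_n | rnorm2 v = 1 /\ orth v]%classic.
have cA : compact A.
  apply: (@subclosed_compact _ _
     [set v : 'rV[R]_n | forall i, `[(-1 : R), 1]%classic (v ord0 i)]%classic).
  - have -> : A = ((fun v => rnorm2 v) @^-1` [set 1] `&`
                   (fun v => bform 1%:M v c) @^-1` [set 0])%classic by [].
    apply: closedI; apply: (proj1 (continuous_closedP _)) => //.
      exact: bform_diag_continuous.
    exact: bform1_continuous.
  - by apply: (@rV_compact _ _ (fun=> `[(-1:R), 1]%classic)) => i; exact: segment_compact.
  - move=> v [v1 _] i /=; rewrite in_itv /=.
    by have := rnorm2_coord v i; rewrite v1 => h; apply/andP; split; nra.
have [v vA vmin] := compact_EVT_min (ex_intro _ v0 v0A) cA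
  (continuous_subspaceT (@bform_diag_continuous R n S)).
move: vA; rewrite inE => vA; exists v => // w wc.
have [/eqP|wn0] := eqVneq (rnorm2 w) 0.
  by rewrite rnorm2_eq0 => /eqP ->; rewrite /rnorm2 /bform !mul0mx !mxE mulr0.
have w2 : 0 < rnorm2 w by rewrite lt_def wn0 rnorm2_ge0.
set r := Num.sqrt (rnorm2 w).
have r0 : 0 < r by rewrite sqrtr_gt0.
have rr : r ^+ 2 = rnorm2 w by rewrite sqr_sqrtr // ltW.
have wA : r^-1 *: w \in A.
  rewrite inE; split; last by rewrite /orth bformZl wc mulr0.
  by rewrite /rnorm2 bformZl bformZr mulrA -expr2 exprVn rr mulVf.
have := vmin _ wA; rewrite /= bformZl bformZr mulrA -expr2 exprVn rr.
by rewrite ler_pdivlMl // mulrC.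
Qed.

Lemma rayleigh_min_stationary v mu : rnorm2 v = 1 -> orth v -> mu = bform S v v ->
  (forall w, orth w -> mu * rnorm2 w <= bform S w w) ->
  forall w, orth w -> bform S v w = mu * bform 1%:M v w.
Proof.
move=> v1 vc muE Hmin w wc.
suff /(congr1 (fun x => x / 2)) : 2 * (bform S v w - mu * bform 1%:M v w) = 0.
  by rewrite mul0r mulrC mulKf ?pnatr_eq0 // => /eqP; rewrite subr_eq0 => /eqP.
apply: (@linear_quadratic_ge0 _ (bform S w w - mu * rnorm2 w)) => t.
have : orth (v + t *: w) by rewrite /orth bformDl bformZl vc wc mulr0 addr0.
move/Hmin; rewrite /rnorm2 !(bformDl, bformDr, bformZl, bformZr) -/(rnorm2 v) v1.
rewrite [bform S w v]bformC // [bform 1%:M w v]bformC ?trmx1 // -muE -subr_ge0.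
by rewrite /rnorm2; nra.
Qed.

Lemma rayleigh : (exists v0, rnorm2 v0 = 1 /\ orth v0) ->
  exists v mu, [/\ rnorm2 v = 1, orth v,
    forall w, orth w -> mu * rnorm2 w <= bform S w w &
    forall w, orth w -> bform S v w = mu * bform 1%:M v w].
Proof.
move=> /rayleigh_min_exists[v [v1 vc] vmin].
exists v, (bform S v v); split => //.
exact: rayleigh_min_stationary.
Qed.

End Rayleigh.

Section CharPolyKernel.
Variable R : realType.

Lemma X2_ndvd_prod_XsubC (s : seq R) : sorted <=%R s -> 0 < nth 0 s 1 ->
  ~~ ('X ^+ 2 %| \prod_(x <- s) ('X - x%:P)).
Proof.
case: s => [|s0 [|s1 s']] //=; rewrite ?ltxx // => srt s1p.
rewrite big_cons; set P := \prod_(_ <- _) _.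
have nr : ~~ root P 0.
  rewrite /P root_prod_XsubC inE negb_or eq_sym (gt_eqF s1p) /=.
  move/andP: srt => [_ /(order_path_min le_trans)/allP s1min].
  by apply/negP => /s1min; rewrite leNgt s1p.
have cp : coprimep ('X ^+ 2) P.
  apply: coprimep_expl; rewrite coprimep_sym -[X in coprimep _ X]subr0.
  by rewrite -polyC0 coprimep_XsubC.
rewrite Gauss_dvdpl //; apply/negP => /dvdp_leq.
by rewrite -size_poly_eq0 size_XsubC size_polyXn => /(_ isT).
Qed.

Lemma unitmx_of_sqr_sub1_eq0 n (E : 'M[R]_n) :
  (E - 1%:M) *m (E - 1%:M) = 0 -> E \in unitmx.
Proof.
move=> N2; have : E *m (1%:M - (E - 1%:M)) = 1%:M.
  rewrite -{1}(subrK 1%:M E) mulmxDl mulmxBr N2 mul1mx mulmx1 subr0.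
  by rewrite addrC subrK.
by case/mulmx1_unit.
Qed.

Lemma char_poly_mx_mul_polyC n (L : 'M[R]_n) (u : 'cV[R]_n) a :
  \sum_k char_poly_mx L a k * (u k 0)%:P = 'X * (u a 0)%:P - ((L *m u) a 0)%:P.
Proof.
under eq_bigr do rewrite !mxE mulrBl.
rewrite sumrB (bigD1 a) //= eqxx mulr1n big1 ?addr0; last first.
  by move=> k /negbTE; rewrite eq_sym => ->; rewrite mulr0n mul0r.
rewrite mxE rmorph_sum; congr (_ - _); apply: eq_bigr => k _.
by rewrite rmorphM.
Qed.

(* Replacing the columns [j], [j'] of the identity by the kernel vectors [c],
   [d] gives a unipotent [E] with [(X - L) E = G diag(X at j, j', 1 elsewhere)],
   so taking determinants puts [X^2] in [char_poly L]. *)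
Lemma X2_dvd_char_poly_of_ker n (L : 'M[R]_n) (c d : 'cV[R]_n) (j j' : 'I_n) :
  j != j' -> L *m c = 0 -> L *m d = 0 ->
  c j 0 = 1 -> c j' 0 = 0 -> d j 0 = 0 -> d j' 0 = 1 ->
  'X ^+ 2 %| char_poly L.
Proof.
move=> jj Lc Ld cj cj' dj dj'; have jj' : j' != j by rewrite eq_sym.
pose E := \matrix_(a, b) (if b == j then c a 0 else if b == j' then d a 0
                          else (a == b)%:R : R).
have EU : E \in unitmx.
  apply: unitmx_of_sqr_sub1_eq0; apply/matrixP => a b; rewrite !mxE big1 // => k _.
  have [kjj'|kjj'] := boolP ((k == j) || (k == j')).
    suff -> : (E - 1%:M) k b = 0 by rewrite mulr0.
    rewrite !mxE; case/orP: kjj' => /eqP ->; do 2?case: eqP => [->|_];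
      by rewrite ?cj ?cj' ?dj ?dj' ?eqxx ?(negbTE jj) ?(negbTE jj') subrr.
  move: kjj'; rewrite negb_or => /andP[/negbTE kj /negbTE kj'].
  by rewrite !mxE kj kj' subrr mul0r.
pose Dv : 'rV[{poly R}]_n := \row_b (if (b == j) || (b == j') then 'X else 1).
pose G : 'M[{poly R}]_n := \matrix_(a, b) (if b == j then (c a 0)%:P
   else if b == j' then (d a 0)%:P else char_poly_mx L a b).
have PI : char_poly_mx L *m map_mx polyC E = G *m diag_mx Dv.
  apply/matrixP => a b; rewrite mul_mx_diag !mxE.
  case: (eqVneq b j) => [->|bj].
    rewrite (eq_bigr (fun k => char_poly_mx L a k * (c k 0)%:P)); last first.
      by move=> k _; rewrite !mxE eqxx.
    by rewrite char_poly_mx_mul_polyC Lc mxE polyC0 subr0 mulrC.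
  case: (eqVneq b j') => [->|bj'].
    rewrite (eq_bigr (fun k => char_poly_mx L a k * (d k 0)%:P)); last first.
      by move=> k _; rewrite !mxE (negbTE jj') eqxx.
    by rewrite char_poly_mx_mul_polyC Ld mxE polyC0 subr0 mulrC orbT.
  rewrite (eq_bigr (fun k =>
      char_poly_mx L a k * ((\col_k ((k == b)%:R : R)) k 0)%:P)); last first.
    by move=> k _; rewrite !mxE (negbTE bj) (negbTE bj').
  rewrite char_poly_mx_mul_polyC !mxE mulr1 (bigD1 b) //= big1 ?addr0; last first.
    by move=> k /negbTE kb; rewrite !mxE kb mulr0.
  rewrite !mxE eqxx mulr1.
  by case: (a == b); rewrite ?mulr1 ?mulr0 ?mulr1n ?mulr0n.
have detE : char_poly L * (\det E)%:P = \det G * 'X ^+ 2.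
  have := congr1 determinant PI; rewrite !det_mulmx det_diag det_map_mx => ->.
  congr (_ * _); rewrite (bigD1 j) //= (bigD1 j') //= big1 => [|i /andP[ij' ij]].
    by rewrite !mxE !eqxx orbT mulr1 expr2.
  by rewrite mxE (negbTE ij) (negbTE ij').
have dE : \det E != 0 by rewrite -unitfE -unitmxE.
have -> : char_poly L = char_poly L * (\det E)%:P * ((\det E)^-1)%:P.
  by rewrite -mulrA -polyCM mulfV // mulr1.
by rewrite detE mulrAC dvdp_mull.
Qed.

Lemma laplacian_mul_const1 n (L : 'M[R]_n) :
  (forall i, \sum_k L i k = 0) -> L *m (const_mx 1 : 'cV[R]_n) = 0.
Proof.
move=> rs; apply/colP => i; rewrite !mxE -[RHS](rs i).
by apply: eq_bigr => k _; rewrite mxE mulr1.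
Qed.

(* With the constant vector, a non-constant kernel vector spans a
   two-dimensional kernel. *)
Lemma X2_dvd_char_poly_laplacian n (L : 'M[R]_n) (w : 'cV[R]_n) (j j' : 'I_n) :
  (forall i, \sum_k L i k = 0) -> L *m w = 0 -> w j 0 != w j' 0 ->
  'X ^+ 2 %| char_poly L.
Proof.
move=> rs Lw wjj.
have jj : j != j' by apply: contraNneq wjj => ->.
set del := w j' 0 - w j 0.
have del0 : del != 0 by rewrite subr_eq0 eq_sym.
pose d : 'cV[R]_n := del^-1 *: (w - w j 0 *: const_mx 1).
have Ld : L *m d = 0.
  by rewrite -scalemxAr mulmxBr Lw -scalemxAr laplacian_mul_const1 // scaler0 subr0 scaler0.
apply: (@X2_dvd_char_poly_of_ker _ L (const_mx 1 - d) d j j') => //.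
- by rewrite mulmxBr laplacian_mul_const1 // Ld subr0.
- by rewrite !mxE mulr1 subrr mulr0 subr0.
- by rewrite !mxE mulr1 -/del mulVf // subrr.
- by rewrite !mxE mulr1 subrr mulr0.
- by rewrite !mxE mulr1 -/del mulVf.
Qed.

End CharPolyKernel.

Section LaplacianCoercive.
Variable R : realType.
Variable n : nat.
Implicit Types (L : 'M[R]_n) (v w : 'rV[R]_n).

Lemma bform1_delta_const (k : 'I_n) :
  bform 1%:M (delta_mx 0 k : 'rV[R]_n) (const_mx 1) = 1.
Proof. by rewrite bformC ?trmx1 // bform_delta_r mulmx1 mxE. Qed.

Lemma exists_unit_orth_const : (1 < n)%N ->
  exists v0 : 'rV[R]_n, rnorm2 v0 = 1 /\ bform 1%:M v0 (const_mx 1) = 0.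
Proof.
move=> n2; pose i0 : 'I_n := Ordinal (ltnW n2); pose i1 : 'I_n := Ordinal n2.
have i01 : i0 != i1 by [].
have s2 : Num.sqrt (2 : R) ^+ 2 = 2 by rewrite sqr_sqrtr.
have s20 : Num.sqrt (2 : R) != 0 by rewrite sqrtr_eq0 -ltNge.
exists ((Num.sqrt 2)^-1 *: (delta_mx 0 i0 - delta_mx 0 i1)); split.
  rewrite /rnorm2 -scaleN1r !(bformZl, bformZr, bformDl, bformDr) !bform1_delta.
  rewrite !eqxx (negbTE i01) eq_sym (negbTE i01) !mulrA -expr2 exprVn s2 /=.
  by rewrite mulr0 add0r addr0 mulN1r mulr1 opprK mulVf ?pnatr_eq0.
by rewrite bformZl bformDl -scaleN1r bformZl !bform1_delta_const mulN1r subrr mulr0.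
Qed.

Lemma laplacian_stationary_eigen L v mu :
  (forall i, \sum_k L i k = 0) -> bform 1%:M v (const_mx 1) = 0 ->
  (forall w, bform 1%:M w (const_mx 1) = 0 -> bform L v w = mu * bform 1%:M v w) ->
  v *m L = mu *: v.
Proof.
move=> rs vc stat.
pose u i := (v *m L) 0 i - mu * v 0 i.
have u_const i k : u i = u k.
  have := stat (delta_mx 0 i - delta_mx 0 k).
  rewrite -scaleN1r bformDl bformZl !bform1_delta_const mulN1r subrr => /(_ erefl).
  rewrite !bformDr !bformZr !bform_delta_r mulmx1 /u => h.
  apply/eqP; rewrite -subr_eq0; apply/eqP.
  move: h; set A := (v *m L) 0 i; set B := (v *m L) 0 k; set C := v 0 i; set D := v 0 k.
  by move=> h; rewrite -(subrr (mu * (C + -1 * D))) -{1}h; ring.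
have u_sum : \sum_i u i = 0.
  rewrite /u sumrB -mulr_sumr -[\sum_i v 0 i]bform1_const vc mulr0 subr0.
  under eq_bigr do rewrite mxE.
  by rewrite exchange_big big1 // => k _; rewrite -mulr_sumr rs mulr0.
apply/rowP => i; rewrite [RHS]mxE; apply/eqP; rewrite -subr_eq0; apply/eqP.
have : \sum_(k < n) u k = n%:R * u i.
  by rewrite (eq_bigr (fun=> u i)) ?sumr_const ?card_ord ?mulr_natl // => k _.
have n0 : (0 < n)%N by apply: leq_ltn_trans (ltn_ord i).
by rewrite u_sum => /esym/eqP; rewrite mulf_eq0 pnatr_eq0 (negbTE (lt0n_neq0 n0)) => /eqP.
Qed.

Lemma nonconst_of_orth_const v : v != 0 -> bform 1%:M v (const_mx 1) = 0 ->
  exists j j', v 0 j != v 0 j'.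
Proof.
move=> vn0 vc; have [i vi] : exists i, v 0 i != 0.
  apply/existsP; apply: contraNT vn0; rewrite negb_exists => /forallP v0.
  by apply/eqP/rowP => i; rewrite mxE; apply/eqP; rewrite -[_ == _]negbK v0.
have [/existsP[j vj]|] := boolP [exists j, v 0 j != v 0 i]; first by exists j, i.
rewrite negb_exists => /forallP vconst.
have : \sum_k v 0 k = n%:R * v 0 i.
  rewrite (eq_bigr (fun=> v 0 i)) ?sumr_const ?card_ord ?mulr_natl // => k _.
  by apply/eqP; rewrite -[_ == _]negbK vconst.
have n0 : (0 < n)%N by apply: leq_ltn_trans (ltn_ord i).
rewrite -bform1_const vc => /esym/eqP.
by rewrite mulf_eq0 (negbTE vi) orbF pnatr_eq0 (negbTE (lt0n_neq0 n0)).
Qed.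

End LaplacianCoercive.

Lemma sorted_nth1_le_nonzero (R : realType) (s : seq R) x : sorted <=%R s ->
  0 \in s -> 0 < nth 0 s 1 -> x \in s -> x != 0 -> nth 0 s 1 <= x.
Proof.
case: s => [|s0 [|s1 s']] //=; rewrite ?ltxx // => /andP[_ srt] zs s1p.
have tail_ge y : y \in s1 :: s' -> s1 <= y.
  rewrite inE => /orP[/eqP -> //|ys].
  by have /allP := order_path_min le_trans srt; apply.
have s00 : s0 = 0.
  move: zs; rewrite inE => /orP[/eqP -> //|/tail_ge].
  by rewrite leNgt s1p.
by rewrite inE s00 => /orP[/eqP -> /eqP //|/tail_ge].
Qed.

(* The minimiser of the Rayleigh quotient on [1]^perp is an eigenvector whose
   eigenvalue is nonzero, since 0 is simple when lambda_2 > 0; so it is at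
   least lambda_2. *)
Lemma laplacian_coercive (R : realType) n (L : 'M[R]_n) :
  mean_graph_laplacian L -> lambda2_pos L ->
  exists2 lam, 0 < lam & forall x : 'rV[R]_n,
    bform 1%:M x (const_mx 1) = 0 -> lam * rnorm2 x <= bform L x x.
Proof.
move=> [sL [_ rs]] [s [sz srt cp s1p]].
have n2 : (1 < n)%N.
  by rewrite ltnNge; apply: contraTN s1p => ?; rewrite nth_default ?ltxx // sz.
have [v [mu [v1 vc Hmin stat]]] := rayleigh sL (@exists_unit_orth_const R n n2).
have vL := laplacian_stationary_eigen rs vc stat.
have vn0 : v != 0 by rewrite -rnorm2_eq0 v1 oner_neq0.
have eigen_mem x : eigenvalue L x -> x \in s.
  by rewrite eigenvalue_root_char cp root_prod_XsubC.
have mus : mu \in s by apply/eigen_mem/eigenvalueP; exists v.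
have zs : 0 \in s.
  apply/eigen_mem/eigenvalueP; exists (const_mx 1); last first.
    by apply/negP => /eqP/rowP/(_ (Ordinal (ltnW n2))); rewrite !mxE => /eqP; rewrite oner_eq0.
  rewrite scale0r -[L]sL -[const_mx 1]trmx_const -trmx_mul.
  by rewrite laplacian_mul_const1 // trmx0.
have mu0 : mu != 0.
  apply/negP => /eqP mu0.
  have Lv : L *m v^T = 0 by rewrite -[L]sL -trmx_mul vL mu0 scale0r trmx0.
  have [j [j' vjj]] := nonconst_of_orth_const vn0 vc.
  have := @X2_dvd_char_poly_laplacian R n L v^T j j' rs Lv; rewrite !mxE cp => /(_ vjj).
  by apply/negP; apply: X2_ndvd_prod_XsubC.
exists mu => //; exact: lt_le_trans s1p (sorted_nth1_le_nonzero srt zs s1p mus mu0).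
Qed.

Section CommutingProduct.
Variables (R : realType) (m : nat) (K G : 'M[R]_m).
Hypotheses (symG : G^T = G) (psdG : forall v, 0 <= bform G v v) (unitG : G \in unitmx).
Hypotheses (spdK : spd K) (KG_comm : K *m G = G *m K).

(* [K G] is symmetric, and at an eigenvector [v] for [mu] one has
   [mu (v G v) = (v G) K (v G) > 0] with [v G v >= 0], forcing [mu > 0]. *)
Lemma commuting_product_coercive :
  exists2 c, 0 < c & forall v : 'rV[R]_m, c * rnorm2 v <= bform (K *m G) v v.
Proof.
case: spdK => symK posK.
have symKG : (K *m G)^T = K *m G by rewrite trmx_mul symG symK KG_comm.
have [m0|m_gt0] := posnP m.
  exists 1 => // v; have -> : v = 0 by apply/rowP => i; have := ltn_ord i; rewrite {2}m0.
  by rewrite /rnorm2 /bform !mul0mx mxE mulr0.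
have unit_ex : exists v0 : 'rV[R]_m, rnorm2 v0 = 1 /\ bform 1%:M v0 0 = 0.
  exists (delta_mx 0 (Ordinal m_gt0)).
  by rewrite /rnorm2 bform1_delta eqxx bform1_0r.
have [v [mu [v1 _ Hmin stat]]] := rayleigh symKG unit_ex.
have vn0 : v != 0 by rewrite -rnorm2_eq0 v1 oner_neq0.
have vGn0 : (v *m G)^T != 0.
  rewrite trmx_eq0; apply: contraNneq vn0 => vG0.
  by rewrite -[v]mulmx1 -(mulmxV unitG) mulmxA vG0 mul0mx.
have KG_vvG : bform (K *m G) v (v *m G) = bform K (v *m G) (v *m G).
  by rewrite /bform trmx_mul symG !mulmxA -[v *m K *m G]mulmxA KG_comm mulmxA.
have vvG : bform 1%:M v (v *m G) = bform G v v.
  by rewrite /bform trmx_mul symG mulmx1 mulmxA.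
have Kpos : 0 < bform K (v *m G) (v *m G) by have := posK _ vGn0; rewrite trmxK.
have mu_gt0 : 0 < mu.
  rewrite ltNge; apply/negP => mu_le0.
  have : mu * bform G v v <= 0 by rewrite mulr_le0_ge0.
  by rewrite -vvG -stat ?bform1_0r // KG_vvG leNgt Kpos.
by exists mu => // w; apply: Hmin; rewrite bform1_0r.
Qed.

End CommutingProduct.

Lemma gram_sum_sym (R : realType) N M (Ms : 'I_N -> nat)
    (H : forall n : 'I_N, 'M[R]_(Ms n, M)) : (gram_sum H)^T = gram_sum H.
Proof.
rewrite /gram_sum linear_sum /=; apply: eq_bigr => n _.
by rewrite trmx_mul trmxK.
Qed.

Lemma gram_sum_psd (R : realType) N M (Ms : 'I_N -> nat)
    (H : forall n : 'I_N, 'M[R]_(Ms n, M)) v : 0 <= bform (gram_sum H) v v.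
Proof. by rewrite bform_sum sumr_ge0 // => n _; rewrite bform_gram rnorm2_ge0. Qed.

Section StepSizes.
Variable R : realType.

Lemma wseq_gt0 (a tau : R) i : 0 < a -> 0 < wseq a tau i.
Proof. by move=> a0; rewrite /wseq divr_gt0 // powR_gt0. Qed.

(* [beta(i) / alpha(i)] grows like [(i+1)^(tau1 - tau2)]. *)
Lemma wseq_ratio_eventually_ge (a b t1 t2 g : R) : 0 < a -> 0 < b -> t2 < t1 ->
  exists i1, forall i, (i1 <= i)%N -> g * wseq a t1 i <= wseq b t2 i.
Proof.
move=> a0 b0 t12; set d := t1 - t2.
have d0 : 0 < d by rewrite subr_gt0.
set z := Num.max 0 (g * a / b).
exists (Num.bound (z `^ d^-1)) => i hi; set x : R := i.+1%:R.
have x0 : 0 < x by rewrite ltr0n.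
have zx : z <= x `^ d.
  have -> : z = (z `^ d^-1) `^ d by rewrite -powRrM mulVf ?gt_eqF // powRr1 // le_max lexx.
  apply: ge0_ler_powR; rewrite ?nnegrE ?powR_ge0 ?ltW //.
  apply: (lt_le_trans (archi_boundP _)); first exact: powR_ge0.
  by rewrite /x ler_nat (leq_trans hi).
have t1E : t1 = t2 + d by rewrite /d addrC subrK.
rewrite /wseq -/x t1E powRD; last by apply/implyP => _; rewrite gt_eqF.
have p0 : 0 < x `^ t2 by apply: powR_gt0.
have q0 : 0 < x `^ d by apply: powR_gt0.
rewrite mulrA ler_pdivrMr ?mulr_gt0 // mulrA divfK ?gt_eqF // mulrC.
by rewrite -ler_pdivrMl // (le_trans _ zx) // /z le_max [b^-1 * _]mulrC [a * g]mulrC lexx orbT.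
Qed.

End StepSizes.

Section Perturbation.
Variables (R : realType) (m : nat).
Implicit Types (S : 'M[R]_m) (u e : 'rV[R]_m).

Lemma bform_perturb_ge S u e (eps : R) : 0 < eps ->
  bform S u u - abs_entry_sum S * (eps * rnorm2 u + (eps^-1 + 1) * rnorm2 e)
  <= bform S (u + e) (u + e).
Proof.
move=> eps0; have ieps0 : 0 < eps^-1 by rewrite invr_gt0.
have ue := bform_ge_abs_entry_sum S u e eps0.
have eu := bform_ge_abs_entry_sum S e u ieps0.
have ee := bform_ge_abs_entry_sum S e e ltr01.
rewrite !(bformDl, bformDr) -!addrA lerD2l.
have -> : abs_entry_sum S * (eps * rnorm2 u + (eps^-1 + 1) * rnorm2 e) =
    abs_entry_sum S * ((eps * rnorm2 u + rnorm2 e / eps) / 2)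
  + abs_entry_sum S * ((eps^-1 * rnorm2 e + rnorm2 u / eps^-1) / 2)
  + abs_entry_sum S * ((1 * rnorm2 e + rnorm2 e / 1) / 2).
  by field; rewrite gt_eqF.
by rewrite -addrA !opprD; apply: lerD => //; apply: lerD.
Qed.

(* Cross terms are absorbed by an [eps]-weighted AM-GM, with [eps] chosen so
   that they cost at most half of the coercivity constant on the common part. *)
Lemma perturbed_sum_coercive N (A : 'I_N -> 'M[R]_m) (c : R) : 0 < c ->
  (forall v, c * rnorm2 v <= bform (\sum_n A n) v v) ->
  exists C, forall u (e : 'I_N -> 'rV[R]_m),
    c / 2 * rnorm2 u - C * \sum_n rnorm2 (e n) <= \sum_n bform (A n) (u + e n) (u + e n).
Proof.
move=> c0 coer; set Ct := \sum_n abs_entry_sum (A n).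
have Ct0 : 0 <= Ct by apply: sumr_ge0 => n _; exact: abs_entry_sum_ge0.
pose eps := c / (2 * (Ct + 1)).
have eps0 : 0 < eps by rewrite divr_gt0 // mulr_gt0 // ltr_wpDl.
have Ct_eps : Ct * eps <= c / 2.
  have -> : Ct * eps = c / 2 * (Ct / (Ct + 1)) by rewrite /eps; field; rewrite gt_eqF ?ltr_wpDl.
  by rewrite ler_piMr ?divr_ge0 ?ltW // ltr_pdivrMr ?ltr_wpDl // mul1r ltrDl.
exists (Ct * (eps^-1 + 1)) => u e; set e2 := \sum_n rnorm2 (e n).
have en_le n : rnorm2 (e n) <= e2.
  by rewrite /e2 (bigD1 n) //= lerDl sumr_ge0 // => k _; exact: rnorm2_ge0.
apply: le_trans (ler_sum _ (fun n _ => bform_perturb_ge (A n) u (e n) eps0)).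
rewrite sumrB -bform_sum.
suff : \sum_n abs_entry_sum (A n) * (eps * rnorm2 u + (eps^-1 + 1) * rnorm2 (e n))
    <= Ct * eps * rnorm2 u + Ct * (eps^-1 + 1) * e2.
  have := coer u; have := rnorm2_ge0 u.
  have : Ct * eps * rnorm2 u <= c / 2 * rnorm2 u by rewrite ler_wpM2r ?rnorm2_ge0.
  by move=> *; lra.
rewrite /Ct !mulr_suml -big_split /=; apply: ler_sum => n _.
rewrite mulrDr !mulrA lerD2l ler_wpM2l // mulr_ge0 ?abs_entry_sum_ge0 //.
by rewrite addr_ge0 // invr_ge0 ltW.
Qed.

Lemma sum_rnorm2_add_le N u (e : 'I_N -> 'rV[R]_m) :
  \sum_n rnorm2 (u + e n) <= 2 * N%:R * rnorm2 u + 2 * \sum_n rnorm2 (e n).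
Proof.
have -> : 2 * N%:R * rnorm2 u = \sum_(n < N) (2 * rnorm2 u).
  by rewrite sumr_const card_ord -[RHS]mulr_natr mulrAC.
by rewrite mulr_sumr -big_split /=; apply: ler_sum => n _; apply: rnorm2D_le.
Qed.

End Perturbation.

Section Blocks.
Variables (R : realType) (N M : nat).
Implicit Types y : 'cV[R]_(N * M).

Definition agent_block y (n : 'I_N) : 'rV[R]_M := \row_m y (mxtens_index (n, m)) 0.
Definition coord_slice y (m : 'I_M) : 'rV[R]_N := \row_n y (mxtens_index (n, m)) 0.

Lemma sum_mxtens_index (F : 'I_(N * M) -> R) :
  \sum_k F k = \sum_(n < N) \sum_(m < M) F (mxtens_index (n, m)).
Proof.
rewrite pair_big /= (reindex (@mxtens_index N M)) /=; last first.
  by exists (@mxtens_unindex N M) => k _; rewrite (mxtens_indexK, mxtens_unindexK).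
by apply: eq_bigr => -[n m].
Qed.

Lemma sqnorm_agent_blocks y : sqnorm y = \sum_n rnorm2 (agent_block y n).
Proof.
rewrite /sqnorm sum_mxtens_index; apply: eq_bigr => n _.
by rewrite rnorm2E; apply: eq_bigr => m _; rewrite mxE.
Qed.

Lemma bform_kron_r1 (L : 'M[R]_N) y :
  bform (kron L (1%:M : 'M[R]_M)) y^T y^T = \sum_m bform L (coord_slice y m) (coord_slice y m).
Proof.
transitivity (\sum_n \sum_m \sum_n'
    y (mxtens_index (n, m)) 0 * L n n' * y (mxtens_index (n', m)) 0).
  rewrite bformE sum_mxtens_index; apply: eq_bigr => n _; apply: eq_bigr => m _.
  rewrite sum_mxtens_index; apply: eq_bigr => n' _.
  rewrite (bigD1 m) //= big1 ?addr0; first by rewrite tensmxE !mxE eqxx mulr1.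
  by move=> m' mm'; rewrite tensmxE !mxE eq_sym (negbTE mm') !mulr0 mul0r.
rewrite exchange_big; apply: eq_bigr => m _; rewrite bformE.
by apply: eq_bigr => n _; apply: eq_bigr => n' _; rewrite !mxE.
Qed.

Lemma bform_kron_1l_blockdiag (K : 'M[R]_M) (B : 'I_N -> 'M[R]_M) y :
  bform (kron (1%:M : 'M[R]_N) K *m \sum_n kron (delta_mx n n) (B n)) y^T y^T
  = \sum_n bform (K *m B n) (agent_block y n) (agent_block y n).
Proof.
rewrite mulmx_sumr bform_sum; apply: eq_bigr => n0 _.
rewrite tensmx_mul mul1mx bformE sum_mxtens_index (bigD1 n0) //= [X in _ + X]big1 ?addr0.
  rewrite bformE; apply: eq_bigr => m _.
  rewrite sum_mxtens_index (bigD1 n0) //= [X in _ + X]big1 ?addr0.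
    by apply: eq_bigr => m' _; rewrite tensmxE !mxE !eqxx mul1r.
  move=> n nn0; apply: big1 => m' _.
  by rewrite tensmxE !mxE (negbTE nn0) andbF mul0r mulr0 mul0r.
move=> n nn0; apply: big1 => m _; apply: big1 => k _.
case: (mxtens_indexP k) => n' m'.
by rewrite tensmxE !mxE (negbTE nn0) /= !(mul0r, mulr0).
Qed.

End Blocks.

Lemma scaler_sum_mean (R : realType) (V : lmodType R) N (F : 'I_N -> V) :
  \sum_n F n = N%:R *: (N%:R^-1 *: \sum_n F n).
Proof.
have [N0|N_gt0] := posnP N; last by rewrite scalerA mulfV ?scale1r // pnatr_eq0 -lt0n.
have -> : \sum_n F n = 0 by rewrite big1 // => n; have := ltn_ord n; rewrite {2}N0.
by rewrite !scaler0.
Qed.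

Section Consensus.
Variables (R : realType) (N M : nat) (L : 'M[R]_N).
Hypotheses (symL : L^T = L) (rowsL : forall i, \sum_(j < N) L i j = 0).

Lemma bform_laplacian_shift (x : 'rV[R]_N) (k : R) :
  bform L (x - k *: const_mx 1) (x - k *: const_mx 1) = bform L x x.
Proof.
have L1 u : bform L u (const_mx 1) = 0.
  by rewrite /bform trmx_const -mulmxA laplacian_mul_const1 // mulmx0 mxE.
rewrite -scaleNr !(bformDl, bformDr, bformZl, bformZr) !L1 [bform L (const_mx 1) x]bformC // L1.
by rewrite !mulr0 !addr0.
Qed.

(* Applied to each coordinate slice, shifted by the mean so that it becomes
   orthogonal to the consensus direction. *)
Lemma laplacian_disagreement_le (lam : R) (y : 'cV[R]_(N * M)) ym :
  (forall x, bform 1%:M x (const_mx 1) = 0 -> lam * rnorm2 x <= bform L x x) ->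
  \sum_n agent_block y n = N%:R *: ym ->
  lam * \sum_n rnorm2 (agent_block y n - ym)
  <= \sum_m bform L (coord_slice y m) (coord_slice y m).
Proof.
move=> coer mean_ym.
have -> : \sum_n rnorm2 (agent_block y n - ym)
    = \sum_m rnorm2 (coord_slice y m - ym 0 m *: const_mx 1).
  rewrite (eq_bigr (fun n => \sum_m (y (mxtens_index (n, m)) 0 - ym 0 m) ^+ 2)).
    rewrite exchange_big; apply: eq_bigr => m _; rewrite rnorm2E.
    by apply: eq_bigr => n _; rewrite !mxE mulr1.
  by move=> n _; rewrite rnorm2E; apply: eq_bigr => m _; rewrite !mxE.
rewrite mulr_sumr; apply: ler_sum => m _.
rewrite -(bform_laplacian_shift _ (ym 0 m)); apply: coer.
rewrite bform1_const (eq_bigr (fun n => agent_block y n 0 m - ym 0 m)); last first.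
  by move=> n _; rewrite !mxE mulr1.
rewrite sumrB sumr_const card_ord -mulr_natl.
apply/eqP; rewrite subr_eq0; apply/eqP.
by move/rowP/(_ m): mean_ym; rewrite !mxE summxE.
Qed.

Variables (A : 'I_N -> 'M[R]_M) (lam c C : R).
Hypothesis c0 : 0 < c.
Hypothesis coerL :
  forall x, bform 1%:M x (const_mx 1) = 0 -> lam * rnorm2 x <= bform L x x.
Hypothesis coerA : forall u (e : 'I_N -> 'rV[R]_M),
  c / 2 * rnorm2 u - C * \sum_n rnorm2 (e n) <= \sum_n bform (A n) (u + e n) (u + e n).

Lemma consensus_coercive (al be : R) (y : 'cV[R]_(N * M)) :
  0 < al -> 0 <= be -> (C + c / 2) * al <= be * lam ->
  c / (4 * N.+1%:R) * al * sqnorm y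
  <= be * \sum_m bform L (coord_slice y m) (coord_slice y m)
     + al * \sum_n bform (A n) (agent_block y n) (agent_block y n).
Proof.
move=> al0 be0 weights; rewrite sqnorm_agent_blocks.
set ym := N%:R^-1 *: \sum_n agent_block y n.
pose e n := agent_block y n - ym.
have blockE n : agent_block y n = ym + e n by rewrite /e addrC subrK.
set e2 := \sum_n rnorm2 (e n).
have e20 : 0 <= e2 by apply: sumr_ge0 => n _; exact: rnorm2_ge0.
have T1 : lam * e2 <= \sum_m bform L (coord_slice y m) (coord_slice y m).
  exact: laplacian_disagreement_le coerL (scaler_sum_mean _).
have T2 := coerA ym e; have SQ := sum_rnorm2_add_le ym e.
rewrite -/e2 -(eq_bigr _ (fun n _ => congr1 (fun v => rnorm2 v) (blockE n))) in SQ.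
rewrite -/e2 -(eq_bigr _ (fun n _ => congr1 (fun v => bform (A n) v v) (blockE n))) in T2.
move: T1 T2 SQ; set X1 := \sum_m _; set X2 := \sum_n bform _ _ _; set S := \sum_n _.
set sy := rnorm2 ym; have sy0 : 0 <= sy by exact: rnorm2_ge0.
move=> T1 T2 SQ.
have coupling : (C + c / 2) * al * e2 <= be * X1.
  apply: le_trans (ler_wpM2r e20 weights) _.
  by rewrite -mulrA ler_wpM2l.
have N1 : (0 : R) < N.+1%:R by rewrite ltr0n.
have norm_le : c / (4 * N.+1%:R) * S <= c / 2 * (sy + e2).
  apply: le_trans (_ : c / (4 * N.+1%:R) * (2 * N%:R * sy + 2 * e2) <= _).
    by rewrite ler_wpM2l // divr_ge0 ?mulr_ge0 ?ltW.
  have -> : c / (4 * N.+1%:R) * (2 * N%:R * sy + 2 * e2)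
      = c / 2 * ((N%:R * sy + e2) / N.+1%:R) by field; rewrite gt_eqF.
  rewrite ler_pM2l ?divr_gt0 // ler_pdivrMr // mulrS mulrDr mulr1.
  by rewrite mulrDl [sy * _]mulrC; have := mulr_ge0 e20 (ler0n R N); lra.
apply: le_trans (_ : _ <= (C + c / 2) * al * e2 + al * (c / 2 * sy - C * e2)) _.
  have -> : (C + c / 2) * al * e2 + al * (c / 2 * sy - C * e2) = al * (c / 2 * (sy + e2)).
    by ring.
  by rewrite mulrAC mulrC ler_wpM2l // ltW.
by apply: lerD => //; rewrite ler_wpM2l // ltW.
Qed.

End Consensus.

Theorem lemma3 (R : realType) (N M : nat) (Lbar : 'M[R]_N)
    (Ms : 'I_N -> nat) (H : forall n : 'I_N, 'M[R]_(Ms n, M))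
    (K : 'M[R]_M) (a b tau1 tau2 gamma0 eps1 : R) :
  mean_graph_laplacian Lbar ->
  lambda2_pos Lbar ->
  gram_sum H \in unitmx ->
  spd K ->
  K *m gram_sum H = gram_sum H *m K ->
  0 < a -> 0 < b ->
  0 < tau2 -> tau2 <= tau1 -> tau1 <= 1 ->
  0 <= gamma0 -> gamma0 < 1 / 2 -> 0 < eps1 ->
  1 / 2 + gamma0 < tau1 ->
  tau2 + gamma0 + 1 / (2 + eps1) < tau1 ->
  exists (i1 : nat) (c4 : R), 0 < c4 /\
    forall i : nat, (i1 <= i)%N -> forall y : 'cV[R]_(N * M),
      c4 * wseq a tau1 i * sqnorm y <=
      (y^T *m (wseq b tau2 i *: kron Lbar (1%:M : 'M[R]_M)
               + wseq a tau1 i *: (kron (1%:M : 'M[R]_N) K *m blockdiag_HtH H))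
           *m y) 0 0.
Proof.
move=> lapL lam2L unitG spdK commKG a0 b0 _ _ _ gamma0_ge0 _ eps0 _ tau12.
have tau21 : tau2 < tau1.
  have : 0 < 1 / (2 + eps1) by rewrite divr_gt0 // addr_gt0.
  lra.
have [lam lam0 coerL] := laplacian_coercive lapL lam2L.
have [c c0 coerKG] :=
  commuting_product_coercive (gram_sum_sym H) (gram_sum_psd H) unitG spdK commKG.
have [C coerA] : exists C, forall u (e : 'I_N -> 'rV[R]_M),
    c / 2 * rnorm2 u - C * \sum_n rnorm2 (e n)
    <= \sum_n bform (K *m ((H n)^T *m H n)) (u + e n) (u + e n).
  by apply: perturbed_sum_coercive => // v; rewrite -mulmx_sumr.
have [i1 ratio] := wseq_ratio_eventually_ge ((C + c / 2) / lam) a0 b0 tau21.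
exists i1, (c / (4 * N.+1%:R)); split => [|i /ratio weights y]; first by rewrite divr_gt0.
rewrite quad_bform bform_add !bform_scale bform_kron_r1 bform_kron_1l_blockdiag.
have [symL [_ rowsL]] := lapL.
apply: (consensus_coercive symL rowsL c0 coerL coerA).
- exact: wseq_gt0.
- exact/ltW/wseq_gt0.
- by rewrite mulrAC ler_pdivrMr in weights.
Qed.
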